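(* For $\mathbf{x}=(x_1,\dots,x_N)^{\mathrm T}\in\mathbb{R}^N$ define $$\ell_{\mathrm{osb}}(\mathbf{x})=\Big(\sum_{n=1}^N x_n^2\Big)\Big(\sum_{n=1}^N x_n^4\Big)-\Big(\sum_{n=1}^N x_n^3\Big)^2.$$ Then $\ell_{\mathrm{osb}}(\mathbf{x})\ge0$ for all $\mathbf{x}$, and $\ell_{\mathrm{osb}}(\mathbf{x})=0$ if and only if $\mathbf{x}\in\{0,\alpha\}^N$ for some $\alpha\in\mathbb{R}$. Furthermore, $\ell_{\mathrm{osb}}$ has no spurious stationary points: $\nabla\ell_{\mathrm{osb}}(\mathbf{x})=\mathbf{0}$ holds only if $\mathbf{x}\in\{0,\alpha\}^N$ for some $\alpha\in\mathbb{R}$.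
   Context: A spurious stationary point of a differentiable function $\ell$ whose zero set is $\mathcal{X}$ is a point $\mathbf{x}\notin\mathcal{X}$ with $\nabla\ell(\mathbf{x})=\mathbf{0}$. *)

From HB Require Import structures.
From mathcomp Require Import all_boot all_order all_algebra.
From mathcomp Require Import all_classical all_reals all_analysis.
Set Implicit Arguments. Unset Strict Implicit. Unset Printing Implicit Defensive.
Import Order.TTheory GRing.Theory Num.Theory.
Import numFieldNormedType.Exports.
Local Open Scope ring_scope.

Definition ell_osb (R : realType) (N : nat) (x : 'rV[R]_N) : R :=
  (\sum_(n < N) x 0 n ^+ 2) * (\sum_(n < N) x 0 n ^+ 4)
  - (\sum_(n < N) x 0 n ^+ 3) ^+ 2.

Definition gradient (R : realType) (N : nat) (f : 'rV[R]_N -> R)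
  (x : 'rV[R]_N) : 'rV[R]_N :=
  \row_(n < N) derive f x (delta_mx 0 n).

Definition in_zero_alpha (R : realType) (N : nat) (x : 'rV[R]_N) (alpha : R) :=
  forall n : 'I_N, x 0 n = 0 \/ x 0 n = alpha.

(* Writing u := x and v := x^2 coordinatewise, ell_osb is the Cauchy-Schwarz defect
   (u.u)(v.v) - (u.v)^2, so by Lagrange's identity 2 ell_osb = sum_(i,j) (u_i v_j - u_j v_i)^2
   = sum_(i,j) (x_i x_j (x_j - x_i))^2. Hence ell_osb >= 0, with equality iff any two nonzero
   coordinates coincide. Since ell_osb is homogeneous of degree 6, Euler's identity
   x . grad ell_osb(x) = 6 ell_osb(x) shows that every stationary point is a zero. *)

From HB Require Import structures.
From mathcomp Require Import all_boot all_order all_algebra.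
From mathcomp Require Import all_classical all_reals all_analysis.
From mathcomp Require Import ring.
Import Order.TTheory GRing.Theory Num.Theory.
Import numFieldNormedType.Exports.
Local Open Scope ring_scope.

Lemma lagrange_identity (R : comPzRingType) (I : finType) (u v : I -> R) :
  \sum_i \sum_j (u i * v j - u j * v i) ^+ 2 =
  2 * ((\sum_i u i ^+ 2) * (\sum_i v i ^+ 2) - (\sum_i u i * v i) ^+ 2).
Proof.
have sum_prod (F G : I -> R) :
    (\sum_i F i) * (\sum_j G j) = \sum_i \sum_j F i * G j.
  by rewrite big_distrl; apply: eq_bigr => i _; rewrite big_distrr.
transitivity (\sum_i \sum_j (u i ^+ 2 * v j ^+ 2 + u j ^+ 2 * v i ^+ 2
                              - 2 * (u i * v i) * (u j * v j))).
  by apply: eq_bigr => i _; apply: eq_bigr => j _; ring.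
under eq_bigr => i _ do rewrite sumrB big_split /=.
rewrite sumrB big_split /= [X in _ + X - _]exchange_big /= -!sum_prod -mulr_sumr.
ring.
Qed.

Lemma derive_along_horner (R : realType) (V : normedModType R) (f : V -> R)
    (x v : V) (p : {poly R}) :
  (forall h : R, f (h *: v + x) = p.[h]) -> 'D_v f x = p^`().[0].
Proof.
move=> fp; rewrite derivE derive1E.
have fx : f x = p.[0] by rewrite -fp scale0r add0r.
rewrite /derive.
suff -> : (fun h : R => h^-1 *: ((f \o shift x) (h *: v) - f x)) =
          (fun h : R => h^-1 *: ((horner p \o shift 0) (h *: 1) - p.[0])) by [].
by apply/funext => h /=; rewrite fp fx -[h%:A]/(h * 1) mulr1 addr0.
Qed.

Section OsbLoss.
Variables (R : realType) (N : nat).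
Implicit Types (x : 'rV[R]_N) (k : 'I_N).

Definition psum x (p : nat) : R := \sum_(n < N) x 0 n ^+ p.

Lemma ell_osbE x : ell_osb x = psum x 2 * psum x 4 - psum x 3 ^+ 2.
Proof. by []. Qed.

Lemma psum_shift x k (h : R) p :
  psum (h *: delta_mx 0 k + x) p = psum x p + ((x 0 k + h) ^+ p - x 0 k ^+ p).
Proof.
rewrite /psum (bigD1 k) //= [in RHS](bigD1 k) //= !mxE !eqxx mulr1.
have -> : \sum_(n < N | n != k) (h *: delta_mx 0 k + x) 0 n ^+ p =
          \sum_(n < N | n != k) x 0 n ^+ p.
  by apply: eq_bigr => n nk; rewrite !mxE (negbTE nk) andbF mulr0 add0r.
by rewrite (addrC h); ring.
Qed.

Definition psum_line x k p : {poly R} :=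
  (psum x p)%:P + (((x 0 k)%:P + 'X) ^+ p - (x 0 k ^+ p)%:P).

Lemma horner_psum_line x k p (h : R) :
  (psum_line x k p).[h] = psum (h *: delta_mx 0 k + x) p.
Proof. by rewrite psum_shift /psum_line !hornerE. Qed.

Lemma partial_ell_osb x k :
  'D_(delta_mx 0 k) (@ell_osb R N) x =
  2 * x 0 k * psum x 4 + 4 * psum x 2 * x 0 k ^+ 3 - 6 * psum x 3 * x 0 k ^+ 2.
Proof.
rewrite (@derive_along_horner _ _ _ _ _
          (psum_line x k 2 * psum_line x k 4 - psum_line x k 3 ^+ 2)).
  rewrite !derivCE !hornerE /=; ring.
by move=> h; rewrite ell_osbE hornerD hornerN hornerM horner_exp !horner_psum_line.
Qed.

Lemma euler_ell_osb x :
  \sum_k x 0 k * gradient (@ell_osb R N) x 0 k = 6 * ell_osb x.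
Proof.
transitivity (\sum_k (x 0 k ^+ 2 * (2 * psum x 4) + x 0 k ^+ 4 * (4 * psum x 2)
                        - x 0 k ^+ 3 * (6 * psum x 3))).
  by apply: eq_bigr => k _; rewrite mxE partial_ell_osb; ring.
by rewrite sumrB big_split /= -!mulr_suml -/(psum x 2) -/(psum x 3) -/(psum x 4) ell_osbE; ring.
Qed.

Lemma ell_osb_lagrange x :
  2 * ell_osb x = \sum_i \sum_j (x 0 i * x 0 j * (x 0 j - x 0 i)) ^+ 2.
Proof.
rewrite ell_osbE (_ : psum x 4 = \sum_n (x 0 n ^+ 2) ^+ 2); last first.
  by apply: eq_bigr => n _; rewrite -exprM.
rewrite (_ : psum x 3 = \sum_n x 0 n * x 0 n ^+ 2); last first.
  by apply: eq_bigr => n _; rewrite -exprS.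
rewrite -(@lagrange_identity _ _ (x 0) (fun n => x 0 n ^+ 2)).
by apply: eq_bigr => i _; apply: eq_bigr => j _; congr (_ ^+ 2); ring.
Qed.

Lemma ell_osb_ge0 x : 0 <= ell_osb x.
Proof.
rewrite -(pmulr_rge0 _ (ltr0Sn _ 1)) ell_osb_lagrange.
by apply: sumr_ge0 => i _; apply: sumr_ge0 => j _; apply: sqr_ge0.
Qed.

Lemma ell_osb_eq0_pairwise x :
  ell_osb x = 0 <-> forall i j, x 0 i * x 0 j * (x 0 j - x 0 i) = 0.
Proof.
have row_ge0 i : 0 <= \sum_j (x 0 i * x 0 j * (x 0 j - x 0 i)) ^+ 2.
  by apply: sumr_ge0 => j _; apply: sqr_ge0.
split=> [ell0 i j | pair0].
  have lagrange0 : \sum_i \sum_j (x 0 i * x 0 j * (x 0 j - x 0 i)) ^+ 2 = 0.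
    by rewrite -ell_osb_lagrange ell0 mulr0.
  have row0 := psumr_eq0P (fun i _ => row_ge0 i) lagrange0 (i := i) isT.
  apply/eqP; rewrite -sqrf_eq0; apply/eqP.
  by apply: (psumr_eq0P _ row0) => // k _; apply: sqr_ge0.
have : 2 * ell_osb x = 0.
  by rewrite ell_osb_lagrange big1 // => i _; rewrite big1 // => j _; rewrite pair0 expr0n.
by move/eqP; rewrite mulf_eq0 pnatr_eq0 => /eqP.
Qed.

Lemma pairwise_in_zero_alpha x :
  (forall i j, x 0 i * x 0 j * (x 0 j - x 0 i) = 0) <->
  exists alpha : R, in_zero_alpha x alpha.
Proof.
split=> [pair0 | [alpha x_in] i j]; last first.
  by case: (x_in i) => ->; case: (x_in j) => ->; ring.
case: (pickP (fun k => x 0 k != 0)) => [k xk_neq0 | x_eq0]; last first.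
  by exists 0 => n; left; apply/eqP; rewrite -[_ == _]negbK x_eq0.
exists (x 0 k) => n; have /eqP := pair0 n k.
rewrite !mulf_eq0 subr_eq0 eq_sym (negbTE xk_neq0) orbF.
by case/orP=> /eqP ->; [left | right].
Qed.

Lemma ell_osb_eq0P x : ell_osb x = 0 <-> exists alpha : R, in_zero_alpha x alpha.
Proof. exact: iff_trans (ell_osb_eq0_pairwise x) (pairwise_in_zero_alpha x). Qed.

Lemma gradient_ell_osb_eq0 x : gradient (@ell_osb R N) x = 0 -> ell_osb x = 0.
Proof.
move=> grad0; have : 6 * ell_osb x = 0.
  by rewrite -euler_ell_osb big1 // => k _; rewrite grad0 mxE mulr0.
by move/eqP; rewrite mulf_eq0 pnatr_eq0 => /eqP.
Qed.

End OsbLoss.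

Theorem mainTheorem4 (R : realType) (N : nat) :
  (forall x : 'rV[R]_N, 0 <= ell_osb x) /\
  (forall x : 'rV[R]_N, ell_osb x = 0 <-> exists alpha : R, in_zero_alpha x alpha) /\
  (forall x : 'rV[R]_N, gradient (@ell_osb R N) x = 0 ->
     exists alpha : R, in_zero_alpha x alpha).
Proof.
split; first exact: ell_osb_ge0.
split; first exact: ell_osb_eq0P.
by move=> x /gradient_ell_osb_eq0 /ell_osb_eq0P.
Qed.
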